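(* Let $\ell^1$ be the Banach space of complex sequences $a=(a(n))_{n\ge1}$ with $\|a\|=\sum_n|a(n)|<\infty$, equipped with the product $(a*b)(1)=a(1)b(1)$ and $(a*b)(n)=a(1)b(n)+b(1)a(n)+a(n)b(n)$ for $n>1$. Its character space is $\{\phi_1\}\cup\{\phi_1+\phi_n:n>1\}$ where $\phi_n(a)=a(n)$. Then $\ell^1$ is neither left $\phi_1$-amenable nor $\phi_1$-biflat, but $\ell^1$ is approximately left character biprojective.
   Context: For a Banach algebra $A$ and character $\phi$: $A$ is left $\phi$-amenable if there is a bounded net $(a_\alpha)$ in $A$ with $\|aa_\alpha-\phi(a)a_\alpha\|\to0$ for all $a$ and $\phi(a_\alpha)\to1$. $A\otimes_pA$ is the projective tensor product with $a\cdot(b\otimes c)=ab\otimes c$, $(b\otimes c)\cdot a=b\otimes ca$, $\pi_A(a\otimes b)=ab$; $\tilde\phi(F)=F(\phi)$ for $F\in A^{**}$. $A$ is $\phi$-biflat if there is a bounded $A$-bimodule morphism $\rho:A\to(A\otimes_pA)^{**}$ with $\tilde\phi(\pi_A^{**}(\rho(a)))=\phi(a)$ for all $a$. $A$ is approximately left $\phi$-biprojective if there is a net $(\rho_\alpha)$ of bounded linear maps $A\to A\otimes_pA$ such that for all $a,x\in A$: $\|a\cdot\rho_\alpha(x)-\rho_\alpha(ax)\|\to0$, $\|\rho_\alpha(xa)-\phi(a)\rho_\alpha(x)\|\to0$, $\phi(\pi_A(\rho_\alpha(x)))-\phi(x)\to0$; approximately left character biprojective means this holds for every character. *)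

From Stdlib Require Import Reals ClassicalEpsilon.
Open Scope R_scope.

Record C : Type := mkC { re : R ; im : R }.
Definition C0 : C := mkC 0 0.
Definition C1 : C := mkC 1 0.
Definition Cadd (z w : C) : C := mkC (re z + re w) (im z + im w).
Definition Copp (z : C) : C := mkC (- re z) (- im z).
Definition Csub (z w : C) : C := Cadd z (Copp w).
Definition Cmul (z w : C) : C :=
  mkC (re z * re w - im z * im w) (re z * im w + im z * re w).
Definition Cnorm (z : C) : R := sqrt (re z * re z + im z * im z).

Definition rseries (f : nat -> R) : R :=
  epsilon (inhabits 0) (fun l => Un_cv (fun N => sum_f_R0 f N) l).
Definition csum (f : nat -> C) : C :=
  mkC (rseries (fun n => re (f n))) (rseries (fun n => im (f n))).

(* ---------- the sequence space l^1 (index 0 plays the role of n = 1) ---------- *)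
Definition seqC := nat -> C.
Definition l1 (a : seqC) : Prop :=
  exists M, forall N, sum_f_R0 (fun n => Cnorm (a n)) N <= M.
Definition l1norm (a : seqC) : R :=
  epsilon (inhabits 0)
    (is_lub (fun r => exists N, r = sum_f_R0 (fun n => Cnorm (a n)) N)).
Definition sadd (a b : seqC) : seqC := fun n => Cadd (a n) (b n).
Definition ssub (a b : seqC) : seqC := fun n => Csub (a n) (b n).
Definition sscal (c : C) (a : seqC) : seqC := fun n => Cmul c (a n).
Definition delta (m : nat) : seqC := fun n => if Nat.eqb n m then C1 else C0.

Definition lmul (a b : seqC) : seqC := fun n =>
  match n with
  | O => Cmul (a O) (b O)
  | S _ => Cadd (Cadd (Cmul (a O) (b n)) (Cmul (b O) (a n))) (Cmul (a n) (b n))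
  end.

Definition functional := seqC -> C.
Definition character (phi : functional) : Prop :=
  (forall a b, l1 a -> l1 b -> phi (sadd a b) = Cadd (phi a) (phi b)) /\
  (forall c a, l1 a -> phi (sscal c a) = Cmul c (phi a)) /\
  (forall a b, l1 a -> l1 b -> phi (lmul a b) = Cmul (phi a) (phi b)) /\
  (exists K, forall a, l1 a -> Cnorm (phi a) <= K * l1norm a) /\
  (exists a, l1 a /\ phi a <> C0).
Definition phin (n : nat) : functional := fun a => a n.
Definition agree (phi psi : functional) : Prop := forall a, l1 a -> phi a = psi a.

Definition directed (D : Type) (le : D -> D -> Prop) : Prop :=
  inhabited D /\ (forall i, le i i) /\
  (forall i j k, le i j -> le j k -> le i k) /\
  (forall i j, exists k, le i k /\ le j k).
Definition net_to0 {D : Type} (le : D -> D -> Prop) (f : D -> R) : Prop :=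
  forall eps, eps > 0 -> exists i0, forall i, le i0 i -> Rabs (f i) < eps.

Definition left_phi_amenable (phi : functional) : Prop :=
  exists (D : Type) (le : D -> D -> Prop) (x : D -> seqC),
    directed D le /\
    (exists K, forall i, l1 (x i) /\ l1norm (x i) <= K) /\
    (forall a, l1 a ->
       net_to0 le (fun i => l1norm (ssub (lmul a (x i)) (sscal (phi a) (x i))))) /\
    net_to0 le (fun i => Cnorm (Csub (phi (x i)) C1)).

(* ---------- projective tensor product l^1 (x)_p l^1, modelled as l^1(N x N)
   via the isometric identification delta_m (x) delta_n <-> e_(m,n) ---------- *)
Definition tens := nat -> nat -> C.
Definition sq_sum (u : tens) (N : nat) : R :=
  sum_f_R0 (fun m => sum_f_R0 (fun n => Cnorm (u m n)) N) N.
Definition l1T (u : tens) : Prop := exists M, forall N, sq_sum u N <= M.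
Definition normT (u : tens) : R :=
  epsilon (inhabits 0) (is_lub (fun r => exists N, r = sq_sum u N)).
Definition tsub (u v : tens) : tens := fun m n => Csub (u m n) (v m n).
Definition tadd (u v : tens) : tens := fun m n => Cadd (u m n) (v m n).
Definition tscal (c : C) (u : tens) : tens := fun m n => Cmul c (u m n).
(* a.(b (x) c) = ab (x) c ;  (b (x) c).a = b (x) ca *)
Definition tlact (a : seqC) (u : tens) : tens := fun m n => lmul a (fun p => u p n) m.
Definition tract (u : tens) (a : seqC) : tens := fun m n => lmul (u m) a n.
(* pi(b (x) c) = bc, extended continuously: pi(u) = sum u(m,n) delta_m * delta_n *)
Definition piA (u : tens) : seqC := fun k =>
  csum (fun m => csum (fun n => Cmul (u m n) (lmul (delta m) (delta n) k))).

(* ---------- bidual (l^1 (x)_p l^1)^** = (l^oo(N x N))^* ---------- *)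
Definition boundedT (g : tens) (c : R) : Prop := forall m n, Cnorm (g m n) <= c.
(* dual actions on (A (x)_p A)^* = l^oo(N x N):  <u, g.a> = <a.u, g>, <u, a.g> = <u.a, g> *)
Definition dual_ract (g : tens) (a : seqC) : tens := fun m n =>
  csum (fun p => Cmul (lmul a (delta m) p) (g p n)).
Definition dual_lact (a : seqC) (g : tens) : tens := fun m n =>
  csum (fun p => Cmul (lmul (delta n) a p) (g m p)).
Definition bidual := tens -> C.
Definition bid_lact (a : seqC) (F : bidual) : bidual := fun g => F (dual_ract g a).
Definition bid_ract (F : bidual) (a : seqC) : bidual := fun g => F (dual_lact a g).
Definition bid_eq (F G : bidual) : Prop := forall g c, boundedT g c -> F g = G g.
(* pi^*(phi) as an element of (A (x)_p A)^*, evaluated on delta_m (x) delta_n *)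
Definition pistar (phi : functional) : tens := fun m n => phi (lmul (delta m) (delta n)).

Definition phi_biflat (phi : functional) : Prop :=
  exists rho : seqC -> bidual,
    (forall a, l1 a ->
       (forall g h c d, boundedT g c -> boundedT h d ->
          rho a (tadd g h) = Cadd (rho a g) (rho a h)) /\
       (forall z g c, boundedT g c -> rho a (tscal z g) = Cmul z (rho a g))) /\
    (forall a b, l1 a -> l1 b -> bid_eq (rho (sadd a b)) (fun g => Cadd (rho a g) (rho b g))) /\
    (forall z a, l1 a -> bid_eq (rho (sscal z a)) (fun g => Cmul z (rho a g))) /\
    (exists K, forall a g c, l1 a -> boundedT g c -> Cnorm (rho a g) <= K * l1norm a * c) /\
    (forall a b, l1 a -> l1 b -> bid_eq (rho (lmul a b)) (bid_lact a (rho b))) /\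
    (forall a b, l1 a -> l1 b -> bid_eq (rho (lmul a b)) (bid_ract (rho a) b)) /\
    (* phi~(pi^**(rho a)) = rho a (pi^* phi) = phi a *)
    (forall a, l1 a -> rho a (pistar phi) = phi a).

Definition approx_left_phi_biprojective (phi : functional) : Prop :=
  exists (D : Type) (le : D -> D -> Prop) (rho : D -> seqC -> tens),
    directed D le /\
    (forall i,
       (forall x, l1 x -> l1T (rho i x)) /\
       (forall x y, l1 x -> l1 y -> rho i (sadd x y) = tadd (rho i x) (rho i y)) /\
       (forall z x, l1 x -> rho i (sscal z x) = tscal z (rho i x)) /\
       (exists K, forall x, l1 x -> normT (rho i x) <= K * l1norm x)) /\
    (forall a x, l1 a -> l1 x ->
       net_to0 le (fun i => normT (tsub (tlact a (rho i x)) (rho i (lmul a x)))) /\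
       net_to0 le (fun i => normT (tsub (rho i (lmul x a)) (tscal (phi a) (rho i x)))) /\
       net_to0 le (fun i => Cnorm (Csub (phi (piA (rho i x))) (phi x)))).

Definition approx_left_character_biprojective : Prop :=
  forall phi, character phi -> approx_left_phi_biprojective phi.

(* Indices here follow the paper; the formal indices are one less, so delta 0 is the unit
   delta_1 of the algebra.

   Characters: phi(delta_1) = 1 and every delta_n is idempotent, so phi(delta_n) is 0 or 1.
   Since delta_n a = (a(1) + a(n)) delta_n for n > 1, phi(delta_n) = 1 forces
   phi = phi_1 + phi_n; if instead phi kills every delta_n with n > 1, it agrees with phi_1
   on finitely supported sequences, hence everywhere by continuity.

   Left phi_1-amenability fails: as phi_1(delta_n) = 0, the condition at delta_n says
   x(1) + x(n) -> 0 along the net, while x(1) -> 1; so eventually |x(n)| >= 1/2 for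
   n = 2, ..., N+1, for every N, which no bounded net allows.

   phi_1-biflatness fails: for F = rho(delta_1) the bimodule property gives
   delta_p . F = rho(delta_p) = F . delta_p. Testing on the indicator g_p of (p, 1) in
   l^oo(N x N) = (l^1 (x)_p l^1)^* yields F(g_1) + F(g_p) = 0, and F(g_1) = phi_1(delta_1) = 1.
   So F is -N on g_2 + ... + g_(N+1), of sup norm 1, contradicting boundedness of rho.

   Approximate biprojectivity: rho_i(x) = phi(x) w_i (x) delta_1 works whenever phi(w_i) = 1
   and a w_i - phi(a) w_i -> 0. For phi_1 + phi_n take w_i = delta_n; for phi_1 take
   w_i = delta_1 - delta_2 - ... - delta_(i+1), for which a w_i - a(1) w_i is a tail of a. *)

From Stdlib Require Import Reals ClassicalEpsilon Lra Lia FunctionalExtensionality.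
Open Scope R_scope.

(** * Complex numbers *)

Lemma Cext (z w : C) : re z = re w -> im z = im w -> z = w.
Proof. destruct z, w; simpl; intros; subst; reflexivity. Qed.

Ltac Cring := apply Cext; simpl; ring.

Lemma Cnorm_ge0 z : 0 <= Cnorm z.
Proof. apply sqrt_pos. Qed.

Lemma Cnorm_C0 : Cnorm C0 = 0.
Proof. unfold Cnorm; simpl. replace (0 * 0 + 0 * 0) with 0 by ring. apply sqrt_0. Qed.

Lemma Cnorm_C1 : Cnorm C1 = 1.
Proof. unfold Cnorm; simpl. replace (1 * 1 + 0 * 0) with 1 by ring. apply sqrt_1. Qed.

Lemma Cnorm_mul z w : Cnorm (Cmul z w) = Cnorm z * Cnorm w.
Proof. unfold Cnorm; simpl. rewrite <- sqrt_mult by nra. f_equal. ring. Qed.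

Lemma Cnorm_opp z : Cnorm (Copp z) = Cnorm z.
Proof. unfold Cnorm; simpl. f_equal. ring. Qed.

Lemma Cnorm_add_le z w : Cnorm (Cadd z w) <= Cnorm z + Cnorm w.
Proof.
  destruct z as [a b], w as [c d]; unfold Cnorm; simpl.
  set (s1 := sqrt (a * a + b * b)); set (s2 := sqrt (c * c + d * d)).
  assert (h1 : s1 * s1 = a * a + b * b) by (apply sqrt_sqrt; nra).
  assert (h2 : s2 * s2 = c * c + d * d) by (apply sqrt_sqrt; nra).
  assert (p1 : 0 <= s1) by apply sqrt_pos.
  assert (p2 : 0 <= s2) by apply sqrt_pos.
  assert (cauchy_schwarz : a * c + b * d <= s1 * s2).
  { assert (lagrange : (s1 * s2) * (s1 * s2)
                       = (a * c + b * d) * (a * c + b * d) + (a * d - b * c) * (a * d - b * c))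
      by (replace ((s1 * s2) * (s1 * s2)) with ((s1 * s1) * (s2 * s2)) by ring;
          rewrite h1, h2; ring).
    assert (0 <= (a * d - b * c) * (a * d - b * c)) by apply Rle_0_sqr.
    assert (0 <= s1 * s2) by nra.
    destruct (Rle_dec (a * c + b * d) 0); nra. }
  rewrite <- (sqrt_square (s1 + s2)) by lra.
  apply sqrt_le_1_alt. nra.
Qed.

Lemma Cnorm_eq0 z : Cnorm z = 0 -> z = C0.
Proof.
  unfold Cnorm; intro h. apply sqrt_eq_0 in h; [|nra].
  destruct z as [a b]; apply Cext; simpl in *; nra.
Qed.

Lemma Csub_eq0 z w : Csub z w = C0 -> z = w.
Proof.
  intro h. apply Cext; [apply (f_equal re) in h | apply (f_equal im) in h]; simpl in h; lra.
Qed.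

Lemma Cmul_integral z w : Cmul z w = C0 -> z = C0 \/ w = C0.
Proof.
  intro h. assert (hn : Cnorm z * Cnorm w = 0) by (rewrite <- Cnorm_mul, h; apply Cnorm_C0).
  destruct (Rmult_integral _ _ hn); [left | right]; apply Cnorm_eq0; assumption.
Qed.

Lemma Cmul_eq_r_C1 z w : Cmul z w = w -> w <> C0 -> z = C1.
Proof.
  intros h hw. apply Csub_eq0.
  assert (e : Cmul (Csub z C1) w = C0)
    by (replace (Cmul (Csub z C1) w) with (Csub (Cmul z w) w) by Cring; rewrite h; Cring).
  destruct (Cmul_integral _ _ e); tauto.
Qed.

Lemma Cidempotent z : Cmul z z = z -> z = C0 \/ z = C1.
Proof.
  intro h.
  assert (e : Cmul z (Csub z C1) = C0)
    by (replace (Cmul z (Csub z C1)) with (Csub (Cmul z z) z) by Cring; rewrite h; Cring).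
  destruct (Cmul_integral _ _ e) as [e0 | e1]; [left | right; apply Csub_eq0]; assumption.
Qed.

Lemma Cnorm_ge_half z w :
  Cnorm (Csub z C1) < 1 / 4 -> Cnorm (Cadd z w) < 1 / 4 -> 1 / 2 <= Cnorm w.
Proof.
  intros hz hzw.
  assert (e : C1 = Cadd (Cadd (Copp (Csub z C1)) (Cadd z w)) (Copp w)) by Cring.
  pose proof (Cnorm_add_le (Cadd (Copp (Csub z C1)) (Cadd z w)) (Copp w)) as t1.
  pose proof (Cnorm_add_le (Copp (Csub z C1)) (Cadd z w)) as t2.
  rewrite <- e, Cnorm_C1, !Cnorm_opp in *. lra.
Qed.

(** * Sums and the space l^1 *)

Lemma epsilon_lub_spec (s : nat -> R) M :
  (forall N, 0 <= s N <= M) ->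
  let r := epsilon (inhabits 0) (is_lub (fun r => exists N, r = s N)) in
  0 <= r <= M /\ forall N, s N <= r.
Proof.
  intros hs r.
  assert (ex : exists m, is_lub (fun r => exists N, r = s N) m).
  { destruct (completeness (fun r => exists N, r = s N)) as [m hm].
    - exists M. intros x [N ->]. apply hs.
    - exists (s 0%nat). eauto.
    - eauto. }
  destruct (epsilon_spec (inhabits 0) _ ex) as [ub lub]. fold r in ub, lub.
  assert (hN : forall N, s N <= r) by (intro N; apply ub; eauto).
  split; [split | exact hN].
  - specialize (hN 0%nat). specialize (hs 0%nat). lra.
  - apply lub. intros x [N ->]. apply hs.
Qed.

Lemma sum_term_le (f : nat -> R) k N :
  (forall n, 0 <= f n) -> (k <= N)%nat -> f k <= sum_f_R0 f N.
Proof.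
  intros hf hk. induction hk as [|N _ IH].
  - destruct k; simpl; [lra|]. pose proof (cond_pos_sum f k hf). lra.
  - rewrite tech5. specialize (hf (S N)). lra.
Qed.

Lemma sum_single (f : nat -> R) k :
  (forall n, n <> k -> f n = 0) -> forall N, (k <= N)%nat -> sum_f_R0 f N = f k.
Proof.
  intros hf N hk. induction hk as [|N hkN IH].
  - destruct k; simpl; [reflexivity|].
    rewrite (sum_eq_R0 f k); [ring|]. intros n hn. apply hf. lia.
  - rewrite tech5, IH, (hf (S N)) by lia. ring.
Qed.

Lemma sum_scal (f : nat -> R) s N : sum_f_R0 (fun k => s * f k) N = s * sum_f_R0 f N.
Proof. rewrite scal_sum. apply sum_eq. intros; ring. Qed.

Lemma rseries_single (f : nat -> R) k : (forall n, n <> k -> f n = 0) -> rseries f = f k.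
Proof.
  intro hf.
  assert (cv : Un_cv (fun N => sum_f_R0 f N) (f k)).
  { intros e he. exists k. intros n hn. rewrite (sum_single f k hf n) by lia.
    unfold Rdist. rewrite Rminus_diag, Rabs_R0. lra. }
  exact (UL_sequence _ _ _ (epsilon_spec (inhabits 0) _ (ex_intro _ _ cv)) cv).
Qed.

Lemma csum_single (f : nat -> C) k : (forall n, n <> k -> f n = C0) -> csum f = f k.
Proof.
  intro hf. apply Cext; simpl;
    apply (rseries_single (fun n => _ (f n)) k); intros n hn; rewrite (hf n hn); reflexivity.
Qed.

Definition psum (a : seqC) (N : nat) : R := sum_f_R0 (fun n => Cnorm (a n)) N.

Lemma psum_ge0 a N : 0 <= psum a N.
Proof. apply cond_pos_sum. intro; apply Cnorm_ge0. Qed.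

Lemma l1norm_spec a : l1 a -> 0 <= l1norm a /\ forall N, psum a N <= l1norm a.
Proof.
  intros [M hM]. destruct (epsilon_lub_spec (psum a) M) as [[h0 _] h].
  - intro N. split; [apply psum_ge0 | apply hM].
  - split; assumption.
Qed.

Lemma l1norm_le a M : (forall N, psum a N <= M) -> l1norm a <= M.
Proof.
  intro hM. destruct (epsilon_lub_spec (psum a) M) as [[_ h] _]; [|exact h].
  intro N. split; [apply psum_ge0 | apply hM].
Qed.

Lemma l1norm_term a k : l1 a -> Cnorm (a k) <= l1norm a.
Proof.
  intro ha. eapply Rle_trans; [|apply (proj2 (l1norm_spec a ha) k)].
  apply (sum_term_le (fun n => Cnorm (a n))); [intro; apply Cnorm_ge0 | lia].
Qed.

Lemma l1norm_term2 a n : l1 a -> (0 < n)%nat -> Cnorm (a 0%nat) + Cnorm (a n) <= l1norm a.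
Proof.
  intros ha hn. eapply Rle_trans; [|apply (proj2 (l1norm_spec a ha) n)].
  destruct n as [|n]; [lia|]. unfold psum. rewrite tech5.
  pose proof (sum_term_le (fun k => Cnorm (a k)) 0 n (fun _ => Cnorm_ge0 _) ltac:(lia)).
  lra.
Qed.

Lemma l1_dominated (a b c : seqC) s t : 0 <= s -> 0 <= t ->
  (forall k, Cnorm (c k) <= s * Cnorm (a k) + t * Cnorm (b k)) -> l1 a -> l1 b -> l1 c.
Proof.
  intros hs ht hc [Ma ha] [Mb hb]. exists (s * Ma + t * Mb). intro N.
  eapply Rle_trans; [apply (sum_growing _ _ N hc)|].
  rewrite sum_plus, !sum_scal. specialize (ha N). specialize (hb N). nra.
Qed.

Lemma l1_le (a b : seqC) : (forall k, Cnorm (b k) <= Cnorm (a k)) -> l1 a -> l1 b.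
Proof.
  intros h ha. apply (l1_dominated a a b 1 0); try lra; try assumption.
  intro k. specialize (h k). lra.
Qed.

Lemma l1_sadd a b : l1 a -> l1 b -> l1 (sadd a b).
Proof.
  apply l1_dominated with (s := 1) (t := 1); try lra.
  intro k. pose proof (Cnorm_add_le (a k) (b k)). unfold sadd. lra.
Qed.


Lemma l1_sscal c a : l1 a -> l1 (sscal c a).
Proof.
  intro ha. apply (l1_dominated a a _ (Cnorm c) 0); try lra; try assumption.
  - apply Cnorm_ge0.
  - intro k. unfold sscal. rewrite Cnorm_mul. lra.
Qed.

Lemma l1_ssub a b : l1 a -> l1 b -> l1 (ssub a b).
Proof.
  apply l1_dominated with (s := 1) (t := 1); try lra.
  intro k. unfold ssub, Csub. pose proof (Cnorm_add_le (a k) (Copp (b k))).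
  rewrite Cnorm_opp in *. lra.
Qed.

Lemma l1_lmul a b : l1 a -> l1 b -> l1 (lmul a b).
Proof.
  intros ha hb. set (M := l1norm a).
  assert (hM : forall k, Cnorm (a k) <= M) by (intro k; apply l1norm_term, ha).
  pose proof (Cnorm_ge0 (a 0%nat)). pose proof (Cnorm_ge0 (b 0%nat)).
  apply (l1_dominated b a _ (Cnorm (a 0%nat) + M) (Cnorm (b 0%nat))); try assumption.
  - specialize (hM 0%nat). lra.
  - intro k. pose proof (Cnorm_ge0 (a k)). pose proof (Cnorm_ge0 (b k)). specialize (hM k).
    destruct k; simpl.
    + rewrite Cnorm_mul. nra.
    + eapply Rle_trans; [apply Cnorm_add_le|]. eapply Rle_trans.
      { apply Rplus_le_compat_r, Cnorm_add_le. }
      rewrite !Cnorm_mul. nra.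
Qed.

Lemma psum_zero N : psum (fun _ => C0) N = 0.
Proof. unfold psum. rewrite sum_cte, Cnorm_C0. ring. Qed.

Lemma psum_mono a M N : (M <= N)%nat -> psum a M <= psum a N.
Proof.
  intro h. induction h as [|N _ IH]; [lra|].
  unfold psum in *. rewrite tech5. pose proof (Cnorm_ge0 (a (S N))). lra.
Qed.

Definition trunc (N : nat) (a : seqC) : seqC := fun k => if Nat.leb k N then a k else C0.
Definition tail (N : nat) (a : seqC) : seqC := fun k => if Nat.leb k N then C0 else a k.

Lemma psum_tail a j N : psum (tail j a) N + psum a j = psum a (Nat.max N j).
Proof.
  induction N as [|N IH].
  - unfold psum, tail; simpl. rewrite Cnorm_C0. ring.
  - unfold psum in *. rewrite tech5. unfold tail at 2.
    destruct (Nat.leb_spec (S N) j).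
    + rewrite Nat.max_r in * by lia. rewrite Cnorm_C0. lra.
    + rewrite Nat.max_l in * by lia. rewrite tech5. lra.
Qed.

Lemma l1_finite_support a N : (forall k, (N < k)%nat -> a k = C0) -> l1 a.
Proof.
  intro ha. exists (psum a N). intro M.
  assert (hz : tail N a = fun _ => C0).
  { extensionality k. unfold tail. destruct (Nat.leb_spec k N); [reflexivity | apply ha; lia]. }
  pose proof (psum_tail a N M) as e. rewrite hz, psum_zero in e.
  pose proof (psum_mono a M (Nat.max M N) ltac:(lia)). unfold psum in *. lra.
Qed.

Lemma l1_zero : l1 (fun _ => C0).
Proof. apply (l1_finite_support _ 0). reflexivity. Qed.

Lemma l1_delta k : l1 (delta k).
Proof.
  apply (l1_finite_support _ k). intros n hn. unfold delta.
  destruct (Nat.eqb_spec n k); [lia | reflexivity].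
Qed.

Lemma l1_tail N a : l1 a -> l1 (tail N a).
Proof.
  apply l1_le. intro k. unfold tail.
  destruct (Nat.leb k N); [rewrite Cnorm_C0; apply Cnorm_ge0 | lra].
Qed.

Lemma l1_trunc N a : l1 (trunc N a).
Proof.
  apply (l1_finite_support _ N). intros k hk. unfold trunc.
  destruct (Nat.leb_spec k N); [lia | reflexivity].
Qed.

Lemma l1norm_zero : l1norm (fun _ => C0) = 0.
Proof.
  apply Rle_antisym.
  - apply l1norm_le. intro N. rewrite psum_zero. lra.
  - apply (l1norm_spec _ l1_zero).
Qed.

Lemma l1norm_sscal_le c a : l1 a -> l1norm (sscal c a) <= Cnorm c * l1norm a.
Proof.
  intro ha. apply l1norm_le. intro N.
  replace (psum (sscal c a) N) with (Cnorm c * psum a N).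
  - apply Rmult_le_compat_l; [apply Cnorm_ge0 | apply l1norm_spec, ha].
  - unfold psum, sscal. rewrite <- sum_scal. apply sum_eq. intros. symmetry. apply Cnorm_mul.
Qed.

Lemma l1norm_tail_to0 a : l1 a -> net_to0 le (fun j => l1norm (tail j a)).
Proof.
  intros ha eps heps.
  assert (grow : Un_growing (psum a)).
  { intro n. unfold psum. rewrite tech5. pose proof (Cnorm_ge0 (a (S n))). lra. }
  destruct (growing_cv _ grow) as [L hL].
  { destruct ha as [M hM]. exists M. intros x [n ->]. apply hM. }
  destruct (hL eps heps) as [i hi]. exists i. intros j hj.
  assert (bound : l1norm (tail j a) <= L - psum a j).
  { apply l1norm_le. intro N. pose proof (psum_tail a j N).
    pose proof (growing_ineq _ _ grow hL (Nat.max N j)). lra. }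
  specialize (hi j hj). unfold Rdist in hi.
  pose proof (growing_ineq _ _ grow hL j).
  pose proof (proj1 (l1norm_spec _ (l1_tail j a ha))).
  rewrite Rabs_left1 in hi by lra. rewrite Rabs_right by lra. lra.
Qed.

(** * Nets *)

Definition eventually {D : Type} (le : D -> D -> Prop) (P : D -> Prop) : Prop :=
  exists i0, forall i, le i0 i -> P i.

Section Nets.
Variables (D : Type) (le : D -> D -> Prop).

Lemma eventually_and (P Q : D -> Prop) : directed D le ->
  eventually le P -> eventually le Q -> eventually le (fun i => P i /\ Q i).
Proof.
  intros [_ [_ [htrans hup]]] [i hi] [j hj]. destruct (hup i j) as [k [hik hjk]].
  exists k. intros l hkl. split; [apply hi | apply hj]; eapply htrans; eassumption.
Qed.

Lemma eventually_forall_le (P : nat -> D -> Prop) : directed D le ->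
  (forall n, eventually le (P n)) ->
  forall N, eventually le (fun i => forall n, (n <= N)%nat -> P n i).
Proof.
  intros hdir hP N. induction N as [|N IH].
  - destruct (hP 0%nat) as [i hi]. exists i. intros j hj n hn.
    replace n with 0%nat by lia. apply hi, hj.
  - destruct (eventually_and _ _ hdir IH (hP (S N))) as [i hi]. exists i. intros j hj n hn.
    destruct (hi j hj) as [hle hS]. destruct (Nat.eq_dec n (S N)) as [-> | ne]; auto.
    apply hle. lia.
Qed.

Lemma net_to0_le (f g : D -> R) c : 0 <= c ->
  (forall i, Rabs (f i) <= c * Rabs (g i)) -> net_to0 le g -> net_to0 le f.
Proof.
  intros hc hfg hg eps heps.
  destruct (hg (eps / (c + 1))) as [i0 hi0]; [apply Rdiv_lt_0_compat; lra|].
  exists i0. intros i hi. specialize (hi0 i hi). specialize (hfg i).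
  assert (c * (eps / (c + 1)) < eps).
  { apply (Rmult_lt_reg_r (c + 1)); [lra|].
    replace (c * (eps / (c + 1)) * (c + 1)) with (c * eps) by (field; lra). nra. }
  pose proof (Rabs_pos (g i)). nra.
Qed.

Lemma net_to0_eq0 (i0 : D) (f : D -> R) : (forall i, f i = 0) -> net_to0 le f.
Proof.
  intros hf eps heps. exists i0. intros i _. rewrite hf, Rabs_R0. lra.
Qed.

Lemma net_to0_const (c : R) : (forall i, le i i) -> net_to0 le (fun _ => c) -> c = 0.
Proof.
  intros hrefl hc. destruct (Req_dec c 0) as [| hne]; [assumption|].
  destruct (hc (Rabs c)) as [i0 hi0]; [apply Rabs_pos_lt, hne|].
  specialize (hi0 i0 (hrefl i0)). lra.
Qed.

End Nets.

Lemma directed_nat : directed nat le.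
Proof.
  split; [constructor; exact 0%nat|]. split; [intro; lia|]. split; [intros; lia|].
  intros i j. exists (Nat.max i j). lia.
Qed.

Ltac destruct_nat_tests := repeat match goal with
  | |- context [Nat.eqb ?a ?b] => destruct (Nat.eqb_spec a b); try subst
  | |- context [Nat.ltb ?a ?b] => destruct (Nat.ltb_spec a b)
  | |- context [Nat.leb ?a ?b] => destruct (Nat.leb_spec a b) end; simpl; try lia.

(** * Characters *)

Lemma lmul_delta0_l a : lmul (delta 0) a = a.
Proof. extensionality n. destruct n; unfold lmul, delta; simpl; Cring. Qed.

Lemma lmul_delta0_r a : lmul a (delta 0) = a.
Proof. extensionality n. destruct n; unfold lmul, delta; simpl; Cring. Qed.

Lemma lmul_delta_idem k : lmul (delta k) (delta k) = delta k.
Proof. extensionality n. destruct n; unfold lmul, delta; destruct_nat_tests; Cring. Qed.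

Lemma lmul_delta_l n a : (0 < n)%nat ->
  lmul (delta n) a = sscal (Cadd (a 0%nat) (a n)) (delta n).
Proof.
  intro hn. extensionality k. destruct k; unfold lmul, delta, sscal; destruct_nat_tests; Cring.
Qed.

Lemma lmul_delta_r n a : (0 < n)%nat ->
  lmul a (delta n) = sscal (Cadd (a 0%nat) (a n)) (delta n).
Proof.
  intro hn. extensionality k. destruct k; unfold lmul, delta, sscal; destruct_nat_tests; Cring.
Qed.

Lemma lmul_sscal_r a c v : lmul a (sscal c v) = sscal c (lmul a v).
Proof. extensionality k. destruct k; unfold lmul, sscal; Cring. Qed.

Record contractive_character (psi : functional) : Prop := {
  cc_add : forall a b, psi (sadd a b) = Cadd (psi a) (psi b);
  cc_scal : forall c a, psi (sscal c a) = Cmul c (psi a);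
  cc_mul : forall a b, psi (lmul a b) = Cmul (psi a) (psi b);
  cc_bound : forall a, l1 a -> Cnorm (psi a) <= l1norm a;
  cc_unit : psi (delta 0) = C1 }.

Definition phi1n (n : nat) : functional := fun a => Cadd (phin 0 a) (phin n a).

Lemma contractive_character_phi1 : contractive_character (phin 0).
Proof.
  split; unfold phin; try reflexivity.
  intros a ha. apply l1norm_term, ha.
Qed.

Lemma contractive_character_phi1n n : (0 < n)%nat -> contractive_character (phi1n n).
Proof.
  intro hn. destruct n as [|n]; [lia|].
  split; unfold phi1n, phin.
  - intros a b. unfold sadd. Cring.
  - intros c a. unfold sscal. Cring.
  - intros a b. simpl. Cring.
  - intros a ha. eapply Rle_trans; [apply Cnorm_add_le | apply l1norm_term2; [exact ha | lia]].
  - unfold delta. simpl. Cring.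
Qed.

Lemma character_of_agree phi psi :
  contractive_character psi -> agree phi psi -> character phi.
Proof.
  intros hpsi hag.
  split; [|split; [|split; [|split]]].
  - intros a b ha hb. rewrite !hag by auto using l1_sadd. apply (cc_add _ hpsi).
  - intros c a ha. rewrite !hag by auto using l1_sscal. apply (cc_scal _ hpsi).
  - intros a b ha hb. rewrite !hag by auto using l1_lmul. apply (cc_mul _ hpsi).
  - exists 1. intros a ha. rewrite hag, Rmult_1_l by exact ha. apply (cc_bound _ hpsi), ha.
  - exists (delta 0). split; [apply l1_delta|].
    rewrite hag, (cc_unit _ hpsi) by apply l1_delta.
    intro e. apply (f_equal re) in e. simpl in e. lra.
Qed.

Section Characters.
Variable phi : functional.
Hypothesis hphi : character phi.

Lemma character_add a b : l1 a -> l1 b -> phi (sadd a b) = Cadd (phi a) (phi b).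
Proof. apply hphi. Qed.

Lemma character_scal c a : l1 a -> phi (sscal c a) = Cmul c (phi a).
Proof. apply hphi. Qed.

Lemma character_mul a b : l1 a -> l1 b -> phi (lmul a b) = Cmul (phi a) (phi b).
Proof. apply hphi. Qed.

Lemma character_delta0 : phi (delta 0) = C1.
Proof.
  destruct hphi as [_ [_ [_ [_ [a [ha hne]]]]]].
  apply (Cmul_eq_r_C1 _ (phi a)); [|exact hne].
  rewrite <- character_mul, lmul_delta0_l by auto using l1_delta. reflexivity.
Qed.

Lemma character_delta_01 k : phi (delta k) = C0 \/ phi (delta k) = C1.
Proof.
  apply Cidempotent. rewrite <- character_mul, lmul_delta_idem by apply l1_delta. reflexivity.
Qed.

Lemma character_continuous (b : nat -> seqC) :
  (forall i, l1 (b i)) -> net_to0 le (fun i => l1norm (b i)) ->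
  net_to0 le (fun i => Cnorm (phi (b i))).
Proof.
  destruct hphi as [_ [_ [_ [[K hK] _]]]].
  intros hb. apply net_to0_le with (c := Rabs K); [apply Rabs_pos|].
  intro i. pose proof (hK (b i) (hb i)). pose proof (proj1 (l1norm_spec _ (hb i))).
  pose proof (Rle_abs K). pose proof (Cnorm_ge0 (phi (b i))).
  rewrite (Rabs_right (Cnorm _)), (Rabs_right (l1norm _)) by lra. nra.
Qed.

Lemma character_agree_phi1n n : (0 < n)%nat -> phi (delta n) = C1 -> agree phi (phi1n n).
Proof.
  intros hn h1 a ha.
  pose proof (character_mul a (delta n) ha (l1_delta n)) as e.
  rewrite lmul_delta_r, character_scal, h1 in e by auto using l1_delta.
  transitivity (Cmul (phi a) C1); [Cring|]. rewrite <- e. unfold phi1n, phin. Cring.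
Qed.

Lemma character_trunc :
  (forall n, (0 < n)%nat -> phi (delta n) = C0) ->
  forall N a, phi (trunc N a) = a 0%nat.
Proof.
  intros h0 N a. induction N as [|N IH].
  - replace (trunc 0 a) with (sscal (a 0%nat) (delta 0))
      by (extensionality k; unfold trunc, sscal, delta; destruct k; simpl; Cring).
    rewrite character_scal, character_delta0 by apply l1_delta. Cring.
  - replace (trunc (S N) a) with (sadd (trunc N a) (sscal (a (S N)) (delta (S N)))).
    + rewrite character_add, character_scal, IH, h0 by auto using l1_sscal, l1_delta, l1_trunc with arith.
      Cring.
    + extensionality k. unfold trunc, sadd, sscal, delta.
      destruct_nat_tests; Cring.
Qed.

Lemma character_agree_phi1 :
  (forall n, (0 < n)%nat -> phi (delta n) = C0) -> agree phi (phin 0).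
Proof.
  intros h0 a ha.
  assert (htail : forall i, phi (tail i a) = Csub (phi a) (a 0%nat)).
  { intro i. replace a with (sadd (trunc i a) (tail i a)) at 2.
    - rewrite character_add, character_trunc by auto using l1_trunc, l1_tail. Cring.
    - extensionality k. unfold sadd, trunc, tail. destruct (Nat.leb k i); Cring. }
  pose proof (character_continuous (fun i => tail i a) (fun i => l1_tail i a ha)
                (l1norm_tail_to0 a ha)) as hcont.
  cbv beta in hcont.
  replace (fun i => Cnorm (phi (tail i a))) with (fun _ : nat => Cnorm (Csub (phi a) (a 0%nat)))
    in hcont by (extensionality i; rewrite htail; reflexivity).
  apply net_to0_const in hcont; [|exact le_n].
  apply Csub_eq0, Cnorm_eq0, hcont.
Qed.

Lemma character_classification : agree phi (phin 0) \/ exists n, (0 < n)%nat /\ agree phi (phi1n n).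
Proof.
  destruct (classic (exists n, (0 < n)%nat /\ phi (delta n) = C1)) as [[n [hn h1]] | hno].
  - right. exists n. split; [exact hn | apply character_agree_phi1n; assumption].
  - left. apply character_agree_phi1. intros n hn.
    destruct (character_delta_01 n) as [| h1]; [assumption|].
    exfalso. apply hno. exists n. split; assumption.
Qed.

End Characters.

(** * Failure of amenability and biflatness *)

Lemma phi1_amenability_defect_delta y n : (0 < n)%nat ->
  ssub (lmul (delta n) y) (sscal (phin 0 (delta n)) y) = sscal (Cadd (y 0%nat) (y n)) (delta n).
Proof.
  intro hn. rewrite lmul_delta_l by exact hn.
  extensionality k. unfold ssub, sscal, phin, delta. destruct n; [lia|]. simpl. Cring.
Qed.

Lemma psum_ge_half y N :
  (forall n, (n < N)%nat -> 1 / 2 <= Cnorm (y (S n))) -> INR N / 2 <= psum y N.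
Proof.
  intro hy. induction N as [|N IH].
  - simpl. pose proof (psum_ge0 y 0). lra.
  - unfold psum in *. rewrite tech5, S_INR.
    specialize (IH (fun n hn => hy n ltac:(lia))). specialize (hy N ltac:(lia)). lra.
Qed.

Theorem not_left_phi1_amenable : ~ left_phi_amenable (phin 0).
Proof.
  intros [D [le [x [hdir [[K hK] [hnet hphi]]]]]].
  assert (hunit : eventually le (fun i => Cnorm (Csub (x i 0%nat) C1) < 1 / 4)).
  { destruct (hphi (1 / 4)) as [i0 hi0]; [lra|]. exists i0. intros i hi.
    specialize (hi0 i hi). rewrite Rabs_right in hi0 by apply Rle_ge, Cnorm_ge0. exact hi0. }
  assert (hdelta : forall n, eventually le (fun i => Cnorm (Cadd (x i 0%nat) (x i (S n))) < 1 / 4)).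
  { intro n. destruct (hnet (delta (S n)) (l1_delta _) (1 / 4)) as [i0 hi0]; [lra|].
    exists i0. intros i hi. specialize (hi0 i hi).
    rewrite phi1_amenability_defect_delta, Rabs_right in hi0 by
      (lia || apply Rle_ge, l1norm_spec, l1_sscal, l1_delta).
    eapply Rle_lt_trans; [|exact hi0].
    eapply Rle_trans; [|apply (l1norm_term _ (S n)), l1_sscal, l1_delta].
    unfold sscal, delta. rewrite Nat.eqb_refl, Cnorm_mul, Cnorm_C1. lra. }
  destruct (INR_archimed (1 / 2) K) as [N hN]; [lra|].
  destruct (eventually_and _ _ _ _ hdir hunit (eventually_forall_le _ _ _ hdir hdelta N))
    as [i0 hi0].
  destruct hdir as [_ [hrefl _]].
  destruct (hi0 i0 (hrefl i0)) as [h1 h2].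
  destruct (hK i0) as [hl hle].
  assert (INR N / 2 <= psum (x i0) N).
  { apply psum_ge_half. intros n hn. apply (Cnorm_ge_half (x i0 0%nat)); [exact h1|].
    apply h2. lia. }
  pose proof (proj2 (l1norm_spec _ hl) N). lra.
Qed.

Definition tzero : tens := fun _ _ => C0.
Definition col0_ind (p : nat) : tens :=
  fun m n => if (Nat.eqb n 0 && Nat.eqb m p)%bool then C1 else C0.
Definition col0_block (N : nat) : tens :=
  fun m n => if (Nat.eqb n 0 && Nat.ltb 0 m && Nat.leb m N)%bool then C1 else C0.

Lemma col0_ind_bounded p : boundedT (col0_ind p) 1.
Proof.
  intros m n. unfold col0_ind.
  destruct (_ && _)%bool; [rewrite Cnorm_C1 | rewrite Cnorm_C0]; lra.
Qed.

Lemma col0_block_bounded N : boundedT (col0_block N) 1.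
Proof.
  intros m n. unfold col0_block.
  destruct (_ && _)%bool; [rewrite Cnorm_C1 | rewrite Cnorm_C0]; lra.
Qed.

Lemma tzero_eq_scal : tzero = tscal C0 (col0_ind 0).
Proof. extensionality m; extensionality n. unfold tzero, tscal. Cring. Qed.

Lemma col0_block_0 : col0_block 0 = tzero.
Proof. extensionality m; extensionality n. unfold col0_block, tzero. destruct_nat_tests; reflexivity. Qed.

Lemma col0_block_S N : col0_block (S N) = tadd (col0_block N) (col0_ind (S N)).
Proof.
  extensionality m; extensionality n. unfold col0_block, col0_ind, tadd.
  destruct_nat_tests; Cring.
Qed.

Lemma pistar_phi1 : pistar (phin 0) = col0_ind 0.
Proof.
  extensionality m; extensionality n. unfold pistar, phin, col0_ind, lmul, delta.
  destruct_nat_tests; Cring.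
Qed.

Lemma dual_ract_col0_ind p : (0 < p)%nat ->
  dual_ract (col0_ind p) (delta p) = tadd (col0_ind 0) (col0_ind p).
Proof.
  intro hp. extensionality m; extensionality n. unfold dual_ract.
  rewrite (csum_single _ p).
  - destruct p as [|p]; [lia|]. unfold col0_ind, tadd, lmul, delta. destruct_nat_tests; Cring.
  - intros q hq. unfold col0_ind. destruct (Nat.eqb_spec q p); [contradiction|].
    rewrite Bool.andb_false_r. Cring.
Qed.

Lemma dual_lact_col0_ind p : (0 < p)%nat -> dual_lact (delta p) (col0_ind p) = tzero.
Proof.
  intro hp. extensionality m; extensionality n. unfold dual_lact.
  rewrite (csum_single _ 0).
  - destruct p as [|p]; [lia|]. unfold col0_ind, tzero, lmul, delta. destruct_nat_tests; Cring.
  - intros q hq. unfold col0_ind. destruct (Nat.eqb_spec q 0); [contradiction|]. simpl. Cring.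
Qed.

Theorem not_phi1_biflat : ~ phi_biflat (phin 0).
Proof.
  intros [rho [hval [_ [_ [[K hK] [hl [hr hpi]]]]]]].
  set (F := rho (delta 0)).
  destruct (hval (delta 0) (l1_delta 0)) as [Fadd Fscal]. fold F in Fadd, Fscal.
  assert (hind0 : F (col0_ind 0) = C1).
  { unfold F. rewrite <- pistar_phi1, hpi by apply l1_delta. reflexivity. }
  assert (hzero : F tzero = C0).
  { rewrite tzero_eq_scal, (Fscal _ _ 1 (col0_ind_bounded 0)). Cring. }
  (* bimodule property: rho(delta_p) = delta_p . F = F . delta_p; test both on col0_ind p *)
  assert (hind : forall p, (0 < p)%nat -> F (col0_ind p) = Copp C1).
  { intros p hp.
    pose proof (hl (delta p) (delta 0) (l1_delta _) (l1_delta _) _ 1 (col0_ind_bounded p)) as el.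
    pose proof (hr (delta 0) (delta p) (l1_delta _) (l1_delta _) _ 1 (col0_ind_bounded p)) as er.
    rewrite lmul_delta0_r in el. rewrite lmul_delta0_l in er. rewrite el in er.
    unfold bid_lact, bid_ract in er. fold F in er.
    rewrite dual_ract_col0_ind, dual_lact_col0_ind, hzero,
      (Fadd _ _ 1 1 (col0_ind_bounded 0) (col0_ind_bounded p)), hind0 in er by exact hp.
    apply Csub_eq0. replace (Csub (F (col0_ind p)) (Copp C1)) with (Cadd C1 (F (col0_ind p)))
      by Cring. exact er. }
  assert (hblock : forall N, F (col0_block N) = mkC (- INR N) 0).
  { induction N as [|N IH].
    - rewrite col0_block_0, hzero. Cring.
    - rewrite col0_block_S, (Fadd _ _ 1 1 (col0_block_bounded N) (col0_ind_bounded (S N))),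
        IH, hind by lia.
      rewrite S_INR. Cring. }
  destruct (INR_archimed 1 (K * l1norm (delta 0))) as [N hN]; [lra|].
  pose proof (hK (delta 0) (col0_block N) 1 (l1_delta 0) (col0_block_bounded N)) as hb.
  fold F in hb. rewrite hblock in hb. unfold Cnorm in hb; simpl in hb.
  replace (- INR N * - INR N + 0 * 0) with (INR N * INR N) in hb by ring.
  rewrite sqrt_square in hb by apply pos_INR. lra.
Qed.

(** * Approximate biprojectivity *)

Definition tprod (v w : seqC) : tens := fun m n => Cmul (v m) (w n).

Lemma tprod_sadd v v' w : tprod (sadd v v') w = tadd (tprod v w) (tprod v' w).
Proof. extensionality m; extensionality n. unfold tprod, tadd, sadd. Cring. Qed.

Lemma tprod_ssub v v' w : tprod (ssub v v') w = tsub (tprod v w) (tprod v' w).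
Proof. extensionality m; extensionality n. unfold tprod, tsub, ssub. Cring. Qed.

Lemma tprod_sscal c v w : tprod (sscal c v) w = tscal c (tprod v w).
Proof. extensionality m; extensionality n. unfold tprod, tscal, sscal. Cring. Qed.

Lemma tlact_tprod a v w : tlact a (tprod v w) = tprod (lmul a v) w.
Proof. extensionality m; extensionality n. unfold tlact, tprod. destruct m; simpl; Cring. Qed.

Lemma sq_sum_tprod_delta0 v N : sq_sum (tprod v (delta 0)) N = psum v N.
Proof.
  apply sum_eq. intros m _.
  rewrite (sum_single _ 0); [| | lia].
  - unfold tprod, delta. simpl. rewrite Cnorm_mul, Cnorm_C1. ring.
  - intros n hn. unfold tprod, delta. destruct (Nat.eqb_spec n 0); [contradiction|].
    rewrite Cnorm_mul, Cnorm_C0. ring.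
Qed.

Lemma normT_tprod_delta0 v : l1 v -> 0 <= normT (tprod v (delta 0)) <= l1norm v.
Proof.
  intro hv. destruct (epsilon_lub_spec (sq_sum (tprod v (delta 0))) (l1norm v)) as [h _];
    [|exact h].
  intro N. rewrite sq_sum_tprod_delta0. split; [apply psum_ge0 | apply l1norm_spec, hv].
Qed.

Lemma l1T_tprod_delta0 v : l1 v -> l1T (tprod v (delta 0)).
Proof.
  intro hv. exists (l1norm v). intro N. rewrite sq_sum_tprod_delta0. apply l1norm_spec, hv.
Qed.

Lemma piA_tprod_delta0 v : piA (tprod v (delta 0)) = v.
Proof.
  extensionality k. unfold piA. rewrite (csum_single _ k).
  - rewrite (csum_single _ 0).
    + rewrite lmul_delta0_r. unfold tprod, delta. rewrite !Nat.eqb_refl. Cring.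
    + intros n hn. unfold tprod, delta. destruct (Nat.eqb_spec n 0); [contradiction|]. Cring.
  - intros m hm. rewrite (csum_single _ 0).
    + rewrite lmul_delta0_r. unfold tprod, delta. destruct (Nat.eqb_spec k m); [lia|]. Cring.
    + intros n hn. unfold tprod, delta. destruct (Nat.eqb_spec n 0); [contradiction|]. Cring.
Qed.

Lemma normT_tprod_sscal_delta0 c v : l1 v ->
  0 <= normT (tprod (sscal c v) (delta 0)) <= Cnorm c * l1norm v.
Proof.
  intro hv. pose proof (normT_tprod_delta0 _ (l1_sscal c v hv)).
  pose proof (l1norm_sscal_le c v hv). lra.
Qed.

Lemma tprod_left_defect psi a x v : contractive_character psi ->
  tsub (tlact a (tprod (sscal (psi x) v) (delta 0))) (tprod (sscal (psi (lmul a x)) v) (delta 0))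
  = tprod (sscal (psi x) (ssub (lmul a v) (sscal (psi a) v))) (delta 0).
Proof.
  intro hpsi. rewrite tlact_tprod, <- tprod_ssub, (cc_mul _ hpsi), lmul_sscal_r. f_equal.
  extensionality k. unfold ssub, sscal. Cring.
Qed.

(* The net w_i need not be bounded; for phi_1 it cannot be, by not_left_phi1_amenable. *)
Theorem approx_left_biprojective_of_net (phi psi : functional) (w : nat -> seqC) :
  contractive_character psi -> agree phi psi ->
  (forall i, l1 (w i)) -> (forall i, psi (w i) = C1) ->
  (forall a, l1 a -> net_to0 le (fun i => l1norm (ssub (lmul a (w i)) (sscal (psi a) (w i))))) ->
  approx_left_phi_biprojective phi.
Proof.
  intros hpsi hag hw hw1 hdefect.
  exists nat, le, (fun i x => tprod (sscal (psi x) (w i)) (delta 0)).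
  split; [exact directed_nat | split].
  - intro i. split; [|split; [|split]].
    + intros x _. apply l1T_tprod_delta0, l1_sscal, hw.
    + intros x y _ _. rewrite (cc_add _ hpsi), <- tprod_sadd. f_equal.
      extensionality k. unfold sadd, sscal. Cring.
    + intros z x _. rewrite (cc_scal _ hpsi), <- tprod_sscal. f_equal.
      extensionality k. unfold sscal. Cring.
    + exists (l1norm (w i)). intros x hx.
      pose proof (normT_tprod_sscal_delta0 (psi x) _ (hw i)).
      pose proof (cc_bound _ hpsi x hx). pose proof (proj1 (l1norm_spec _ (hw i))). nra.
  - intros a x ha hx. split; [|split].
    + apply net_to0_le with (c := Cnorm (psi x))
        (g := fun i => l1norm (ssub (lmul a (w i)) (sscal (psi a) (w i))));
        [apply Cnorm_ge0 | intro i | apply hdefect, ha].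
      assert (hd : l1 (ssub (lmul a (w i)) (sscal (psi a) (w i))))
        by (apply l1_ssub; auto using l1_lmul, l1_sscal).
      rewrite tprod_left_defect by exact hpsi.
      pose proof (normT_tprod_sscal_delta0 (psi x) _ hd). pose proof (proj1 (l1norm_spec _ hd)).
      rewrite !Rabs_right by lra. lra.
    + apply (net_to0_eq0 _ _ 0%nat). intro i.
      rewrite hag, (cc_mul _ hpsi), <- tprod_sscal, <- tprod_ssub by exact ha.
      replace (ssub _ _) with (fun _ : nat => C0)
        by (extensionality k; unfold ssub, sscal; Cring).
      pose proof (normT_tprod_delta0 _ l1_zero). rewrite l1norm_zero in *. lra.
    + apply (net_to0_eq0 _ _ 0%nat). intro i.
      rewrite piA_tprod_delta0, !hag, (cc_scal _ hpsi), hw1 by auto using l1_sscal.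
      replace (Csub (Cmul (psi x) C1) (psi x)) with C0 by Cring. apply Cnorm_C0.
Qed.

Definition phi1_net (i : nat) : seqC :=
  fun p => if Nat.eqb p 0 then C1 else if Nat.leb p i then Copp C1 else C0.

Lemma l1_phi1_net i : l1 (phi1_net i).
Proof.
  apply (l1_finite_support _ i). intros k hk. unfold phi1_net. destruct_nat_tests; reflexivity.
Qed.

Lemma phi1_net_defect a i :
  ssub (lmul a (phi1_net i)) (sscal (phin 0 a) (phi1_net i)) = tail i a.
Proof.
  extensionality k. unfold ssub, sscal, phin, lmul, phi1_net, tail.
  destruct k; destruct_nat_tests; Cring.
Qed.

Theorem approx_left_phi1_biprojective phi :
  agree phi (phin 0) -> approx_left_phi_biprojective phi.
Proof.
  intro hag.
  apply (approx_left_biprojective_of_net phi (phin 0) phi1_net contractive_character_phi1 hag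
           l1_phi1_net (fun _ => eq_refl)).
  intros a ha eps heps. destruct (l1norm_tail_to0 a ha eps heps) as [i0 hi0].
  exists i0. intros i hi. rewrite phi1_net_defect. apply hi0, hi.
Qed.

Theorem approx_left_phi1n_biprojective phi n : (0 < n)%nat ->
  agree phi (phi1n n) -> approx_left_phi_biprojective phi.
Proof.
  intros hn hag.
  apply (approx_left_biprojective_of_net phi (phi1n n) (fun _ => delta n)
           (contractive_character_phi1n n hn) hag (fun _ => l1_delta n)).
  - intros _. unfold phi1n, phin, delta. destruct n; [lia|]. simpl. rewrite Nat.eqb_refl. Cring.
  - intros a ha. apply (net_to0_eq0 _ _ 0%nat). intro i.
    rewrite lmul_delta_r by exact hn.
    replace (ssub _ _) with (fun _ : nat => C0)
      by (extensionality k; unfold ssub, sscal, phi1n, phin; Cring).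
    apply l1norm_zero.
Qed.

Theorem mainTheorem19 :
  (forall phi : functional, character phi <->
     (agree phi (phin 0) \/
      exists n, (0 < n)%nat /\ agree phi (fun a => Cadd (phin 0 a) (phin n a)))) /\
  ~ left_phi_amenable (phin 0) /\
  ~ phi_biflat (phin 0) /\
  approx_left_character_biprojective.
Proof.
  split; [|split; [exact not_left_phi1_amenable | split; [exact not_phi1_biflat |]]].
  - intro phi. split; [apply character_classification|].
    intros [h | [n [hn h]]].
    + exact (character_of_agree _ _ contractive_character_phi1 h).
    + exact (character_of_agree _ _ (contractive_character_phi1n n hn) h).
  - intros phi hphi.
    destruct (character_classification phi hphi) as [h | [n [hn h]]].
    + exact (approx_left_phi1_biprojective phi h).
    + exact (approx_left_phi1n_biprojective phi n hn h).
Qed.
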